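(* For $p\in(0,1]$ define on $(0,1)$ $$w(x)=x^{p}+p(p-1)x-(p^{2}+2p-2)-p(p+1)x^{1-p}+(p-1)^{2}x^{-p}.$$ Then: (i) if $p\in(0,2/3]$, $w(x)>0$ for all $x\in(0,1)$; (ii) if $p\in(2/3,1)$, there is a unique $x_1\in(0,1)$ such that $w>0$ on $(0,x_1)$ and $w<0$ on $(x_1,1)$; (iii) if $p=1$, $w(x)<0$ for all $x\in(0,1)$. *)

(* real powers via Rpower (defined for x > 0). *)
From Stdlib Require Import Reals.
Open Scope R_scope.

Definition w (p x : R) : R :=
  Rpower x p + p * (p - 1) * x - (p ^ 2 + 2 * p - 2)
  - p * (p + 1) * Rpower x (1 - p) + (p - 1) ^ 2 * Rpower x (- p).

(* Up to the factor p, the derivative of w is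
   m(x) = x^(p-1) + (p-1) - (1-p^2) x^(-p) - (1-p)^2 x^(-p-1),
   and m'(x) = (1-p) x^(-p-2) (p(1+p)x + 1 - p^2 - x^(2p)), which is positive on (0,1)
   because x^p lies below its tangent 1 + p(x-1) at 1.  So w is strictly convex on (0,1],
   with w(1) = 4 - 6p and w'(1) = p(3p-2).  For p <= 2/3 the slope of w stays negative, so
   w decreases to w(1) >= 0.  For 2/3 < p < 1 we have w(1) < 0 while w is positive near 0
   (its term (1-p)^2 x^(-p) blows up), so w has a zero, and convexity makes it the only
   sign change.  For p = 1, w(x) = x - 3. *)
From Stdlib Require Import Reals Lra Psatz.
From Coquelicot Require Import Coquelicot.
Open Scope R_scope.

Lemma Rpower_gt_1 x a : 0 < x < 1 -> a < 0 -> 1 < Rpower x a.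
Proof.
  intros hx ha. unfold Rpower. rewrite <- exp_0. apply exp_increasing.
  assert (ln x < 0) by (rewrite <- ln_1; apply ln_increasing; lra). nra.
Qed.

Lemma Rpower_lt_1 x a : 0 < x < 1 -> 0 < a -> Rpower x a < 1.
Proof.
  intros hx ha. unfold Rpower. rewrite <- exp_0. apply exp_increasing.
  assert (ln x < 0) by (rewrite <- ln_1; apply ln_increasing; lra). nra.
Qed.

Lemma Rpower_pos x a : 0 < Rpower x a.
Proof. apply exp_pos. Qed.

Lemma Rpower_1_base a : Rpower 1 a = 1.
Proof. unfold Rpower. rewrite ln_1, Rmult_0_r. apply exp_0. Qed.

Lemma is_derive_Rpower a x : 0 < x -> is_derive (fun t => Rpower t a) x (a * Rpower x (a - 1)).
Proof. intro hx. now apply is_derive_Reals, derivable_pt_lim_power. Qed.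

Lemma ex_derive_Rpower a x : 0 < x -> ex_derive (fun t => Rpower t a) x.
Proof. intro hx. eexists. now apply is_derive_Rpower. Qed.

Lemma Derive_Rpower a x : 0 < x -> Derive (fun t => Rpower t a) x = a * Rpower x (a - 1).
Proof. intro hx. now apply is_derive_unique, is_derive_Rpower. Qed.

Ltac derive_Rpower_sum :=
  auto_derive; [repeat split; apply ex_derive_Rpower; lra
               | rewrite !Derive_Rpower by lra].

Lemma Rpower_lt_tangent a x : 0 < a < 1 -> 0 < x < 1 -> Rpower x a < 1 + a * (x - 1).
Proof.
  intros ha hx.
  destruct (MVT_cor2 (fun t => Rpower t a - a * t) (fun t => a * Rpower t (a - 1) - a) x 1)
    as [c [hmvt hc]]; [lra | |].
  - intros c hc. apply is_derive_Reals. derive_Rpower_sum. ring.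
  - cbv beta in hmvt. rewrite Rpower_1_base in hmvt.
    assert (1 < Rpower c (a - 1)) by (apply Rpower_gt_1; lra).
    assert (0 < a * (Rpower c (a - 1) - 1) * (1 - x))
      by (repeat apply Rmult_lt_0_compat; lra).
    nra.
Qed.

Lemma Rpower_2p_lt p x : 0 < p < 1 -> 0 < x < 1 ->
  Rpower x (2 * p) < p * (1 + p) * x + 1 - p ^ 2.
Proof.
  intros hp hx.
  replace (2 * p) with (p + p) by ring. rewrite Rpower_plus.
  pose proof (Rpower_lt_tangent p x hp hx) as htan.
  pose proof (Rpower_pos x p).
  (* with y = 1 - x, the gap to the tangent squared is p (1 + (1-p) y - p y^2) > 0 *)
  assert ((1 + p * (x - 1)) ^ 2 < p * (1 + p) * x + 1 - p ^ 2).
  { assert (0 < (1 - p) * (1 - x)) by nra.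
    assert (p * (1 - x) ^ 2 < 1) by nra.
    nra. }
  nra.
Qed.

Definition m (p x : R) : R :=
  Rpower x (p - 1) + (p - 1) - (1 - p ^ 2) * Rpower x (- p) - (1 - p) ^ 2 * Rpower x (- p - 1).

Lemma is_derive_w p x : 0 < x -> is_derive (w p) x (p * m p x).
Proof.
  intro hx. unfold w, m. derive_Rpower_sum.
  replace (1 - p - 1) with (- p) by ring. ring.
Qed.

Lemma is_derive_m p x : 0 < x ->
  is_derive (m p) x ((1 - p) * Rpower x (- p - 2) * (p * (1 + p) * x + 1 - p ^ 2 - Rpower x (2 * p))).
Proof.
  intro hx. unfold m. derive_Rpower_sum.
  replace (p - 1 - 1) with (- p - 2 + 2 * p) by ring.
  replace (- p - 1 - 1) with (- p - 2) by ring.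
  replace (- p - 1) with (- p - 2 + 1) by ring.
  rewrite !Rpower_plus, Rpower_1 by exact hx. ring.
Qed.

Lemma w_mvt p a b : 0 < a < b -> exists c, a < c < b /\ w p b - w p a = p * m p c * (b - a).
Proof.
  intros hab.
  destruct (MVT_cor2 (w p) (fun t => p * m p t) a b) as [c [hc1 hc2]]; [lra | |].
  - intros c hc. apply is_derive_Reals, is_derive_w. lra.
  - now exists c.
Qed.

Lemma m_at_1 p : m p 1 = 3 * p - 2.
Proof. unfold m. rewrite !Rpower_1_base. ring. Qed.

Lemma w_at_1 p : w p 1 = 4 - 6 * p.
Proof. unfold w. rewrite !Rpower_1_base. ring. Qed.

Lemma m_increasing p a b : 0 < p < 1 -> 0 < a < b -> b <= 1 -> m p a < m p b.
Proof.
  intros hp hab hb.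
  destruct (MVT_cor2 (m p)
              (fun t => (1 - p) * Rpower t (- p - 2) * (p * (1 + p) * t + 1 - p ^ 2 - Rpower t (2 * p)))
              a b) as [c [hmvt hc]]; [lra | |].
  - intros c hc. apply is_derive_Reals, is_derive_m. lra.
  - pose proof (Rpower_2p_lt p c hp ltac:(lra)).
    pose proof (Rpower_pos c (- p - 2)).
    assert (0 < (1 - p) * Rpower c (- p - 2)
                * (p * (1 + p) * c + 1 - p ^ 2 - Rpower c (2 * p)) * (b - a))
      by (repeat apply Rmult_lt_0_compat; lra).
    lra.
Qed.

Lemma w_slopes_increase p a b c : 0 < p < 1 -> 0 < a < b -> b < c <= 1 ->
  (w p b - w p a) * (c - b) < (w p c - w p b) * (b - a).
Proof.
  intros hp hab hbc.
  destruct (w_mvt p a b) as [s [hs ->]]; [lra |].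
  destruct (w_mvt p b c) as [t [ht ->]]; [lra |].
  assert (m p s < m p t) by (apply m_increasing; lra).
  assert (0 < p * (b - a) * (c - b)) by (apply Rmult_lt_0_compat; nra).
  nra.
Qed.

Lemma w_pos_small_p p : 0 < p <= 2 / 3 -> forall x, 0 < x < 1 -> 0 < w p x.
Proof.
  intros hp x hx.
  destruct (w_mvt p x 1) as [c [hc hmvt]]; [lra |].
  assert (m p c < m p 1) by (apply m_increasing; lra).
  rewrite m_at_1 in *. rewrite w_at_1 in hmvt.
  assert (0 < p * (1 - x)) by nra.
  nra.
Qed.

Lemma w_neg_after_nonpos p a b : 2 / 3 < p < 1 -> 0 < a < b -> b <= 1 ->
  w p a <= 0 -> w p b < 0.
Proof.
  intros hp hab hb hwa.
  pose proof (w_at_1 p) as hw1.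
  destruct (Req_dec b 1) as [-> | hb1]; [lra |].
  pose proof (w_slopes_increase p a b 1 ltac:(lra) hab ltac:(lra)).
  nra.
Qed.

Lemma w_lower_bound p x : 0 < p < 1 -> 0 < x < 1 ->
  (1 - p) ^ 2 * Rpower x (- p) - (p ^ 2 + 4 * p - 2) < w p x.
Proof.
  intros hp hx. unfold w.
  pose proof (Rpower_pos x p).
  assert (Rpower x (1 - p) < 1) by (apply Rpower_lt_1; lra).
  assert (0 < p * (p + 1) * (1 - Rpower x (1 - p))) by (apply Rmult_lt_0_compat; nra).
  assert (0 < p * (1 - p) * (1 - x)) by (apply Rmult_lt_0_compat; nra).
  replace ((p - 1) ^ 2) with ((1 - p) ^ 2) by ring.
  lra.
Qed.

Lemma w_pos_near_0 p : 0 < p < 1 -> exists x0, 0 < x0 < 1 /\ 0 < w p x0.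
Proof.
  intros hp.
  set (q := (1 - p) ^ 2 / 3).
  assert (hq : 0 < q < 1) by (unfold q; split; nra).
  set (x0 := Rpower q (/ p)).
  assert (hx0 : 0 < x0 < 1).
  { split; [apply Rpower_pos | apply Rpower_lt_1; [lra | apply Rinv_0_lt_compat; lra]]. }
  assert (hx0p : (1 - p) ^ 2 * Rpower x0 (- p) = 3).
  { unfold x0. rewrite Rpower_mult. replace (/ p * - p) with (- (1)) by (field; lra).
    rewrite Rpower_Ropp, Rpower_1 by lra. unfold q. field. nra. }
  exists x0. split; [exact hx0 |].
  pose proof (w_lower_bound p x0 hp hx0).
  nra.
Qed.

Lemma w_has_root p : 2 / 3 < p < 1 -> exists z, 0 < z < 1 /\ w p z = 0.
Proof.
  intros hp.
  destruct (w_pos_near_0 p ltac:(lra)) as [x0 [hx0 hw0]].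
  pose proof (w_at_1 p).
  destruct (Ranalysis5.IVT_interv (fun t => - w p t) x0 1) as [z [hz hwz]]; try lra.
  - intros a ha. apply continuity_pt_opp, derivable_continuous_pt.
    exists (p * m p a). apply is_derive_Reals, is_derive_w. lra.
  - exists z. split; [| lra].
    split; [lra |]. destruct (Req_dec z 1) as [-> | ]; lra.
Qed.

Lemma sign_change_point_unique (f : R -> R) y z :
  0 < y < 1 -> 0 < z < 1 ->
  (forall x, 0 < x < y -> 0 < f x) -> (forall x, y < x < 1 -> f x < 0) ->
  (forall x, 0 < x < z -> 0 < f x) -> (forall x, z < x < 1 -> f x < 0) ->
  y = z.
Proof.
  intros hy hz hy1 hy2 hz1 hz2.
  destruct (Rtotal_order y z) as [h | [h | h]]; [exfalso | exact h | exfalso].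
  - specialize (hy2 ((y + z) / 2) ltac:(lra)). specialize (hz1 ((y + z) / 2) ltac:(lra)). lra.
  - specialize (hz2 ((y + z) / 2) ltac:(lra)). specialize (hy1 ((y + z) / 2) ltac:(lra)). lra.
Qed.

Lemma w_sign_around_root p z : 2 / 3 < p < 1 -> 0 < z < 1 -> w p z = 0 ->
  (forall x, 0 < x < z -> 0 < w p x) /\ (forall x, z < x < 1 -> w p x < 0).
Proof.
  intros hp hz hwz. split; intros x hx.
  - destruct (Rlt_or_le 0 (w p x)) as [h | h]; [exact h |].
    pose proof (w_neg_after_nonpos p x z hp ltac:(lra) ltac:(lra) h). lra.
  - apply (w_neg_after_nonpos p z x hp); lra.
Qed.

Lemma w_p1_eq x : 0 < x -> w 1 x = x - 3.
Proof.
  intro hx. unfold w.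
  replace (1 - 1) with 0 by ring.
  rewrite Rpower_1, Rpower_O by exact hx. ring.
Qed.

Theorem mainTheorem8 :
  (forall p : R, 0 < p <= 2 / 3 ->
     forall x : R, 0 < x < 1 -> w p x > 0) /\
  (forall p : R, 2 / 3 < p < 1 ->
     exists! x1 : R, 0 < x1 < 1 /\
       (forall x : R, 0 < x < x1 -> w p x > 0) /\
       (forall x : R, x1 < x < 1 -> w p x < 0)) /\
  (forall x : R, 0 < x < 1 -> w 1 x < 0).
Proof.
  split; [| split].
  - exact w_pos_small_p.
  - intros p hp.
    destruct (w_has_root p hp) as [z [hz hwz]].
    destruct (w_sign_around_root p z hp hz hwz) as [hpos hneg].
    exists z. split; [auto |].
    intros y [hy [hy1 hy2]].
    exact (sign_change_point_unique (w p) z y hz hy hpos hneg hy1 hy2).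
  - intros x hx. rewrite w_p1_eq; lra.
Qed.
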